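(* For each pair $(N,n)\in\{(N,1): N\ge1\}\cup\{(2,2),(3,2),(3,3)\}$ we have $\chi_n(N\times n,2)=2^N$.
   Context: $\mathbb{F}_2^{N\times n}$ is the set of $N\times n$ binary matrices. An exactly $d$-distance coloring is a map $\Gamma:\mathbb{F}_q^{N\times n}\to\{1,\dots,L\}$ such that $\Gamma(M_1)\ne\Gamma(M_2)$ whenever $\mathrm{Rk}(M_1-M_2)=d$ (rank over $\mathbb{F}_q$). $\chi_d(N\times n,q)$ denotes the minimum number $L$ of colors in an exactly $d$-distance coloring. *)

From HB Require Import structures.
From mathcomp Require Import all_boot all_order all_algebra all_fingroup all_field.
Set Implicit Arguments. Unset Strict Implicit. Unset Printing Implicit Defensive.
Import GRing.Theory.
Local Open Scope ring_scope.

Definition exact_dist_coloring (F : fieldType) (N n d L : nat)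
    (G : 'M[F]_(N, n) -> 'I_L) : Prop :=
  forall M1 M2 : 'M[F]_(N, n), \rank (M1 - M2) = d -> G M1 <> G M2.

(* chi_d(N x n, q) = L  iff  L is the minimum number of colors of an
   exactly d-distance coloring. *)
Definition is_chi (F : fieldType) (N n d L : nat) : Prop :=
  (exists G : 'M[F]_(N, n) -> 'I_L, exact_dist_coloring d G) /\
  (forall (L' : nat) (G : 'M[F]_(N, n) -> 'I_L'),
      exact_dist_coloring d G -> (L <= L')%N).

(* For 1 <= n <= N: colouring a matrix by its first column is an exactly
   n-distance colouring with p^N colours, since a difference of rank n has no
   zero column.  Conversely, let L be the field with p^N elements and (e_j) an
   'F_p-basis of L.  The matrices C_a whose j-th column holds the coordinates of
   a * e_j (j < n) form an 'F_p-linear code of size p^N in which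
   C_a - C_b = C_(a-b) has full column rank whenever a <> b, because
   multiplication by a nonzero element is injective; so no two of them can
   share a colour. *)

From HB Require Import structures.
From mathcomp Require Import all_boot all_order all_algebra all_fingroup all_field.
Set Implicit Arguments.
Unset Strict Implicit.
Unset Printing Implicit Defensive.

Import GRing.Theory passmx.
Local Open Scope ring_scope.

Section RegularRepresentation.
Variables (F : fieldType) (L : fieldExtType F).

Definition regular_mx (a : L) : 'M[F]_(\dim {:L}) :=
  mxof (vbasis {:L}) (vbasis {:L}) (amull a).

Lemma regular_mxB a b : regular_mx (a - b) = regular_mx a - regular_mx b.
Proof. by rewrite /regular_mx !linearB. Qed.

Lemma row_free_regular_mx a : a != 0 -> row_free (regular_mx a).
Proof.
move=> nz_a; rewrite -kermx_eq0; apply/rowV0P => u /sub_kermxP.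
rewrite mul_mxof lfunE /= => /eqP.
rewrite rVof_eq0 ?vbasisP // mulf_eq0 (negPf nz_a) vecof_eq0 ?vbasisP //.
by move/eqP.
Qed.

Definition regular_code n (a : L) : 'M[F]_(\dim {:L}, n) :=
  (pid_mx n *m regular_mx a)^T.

Lemma rank_regular_code n : (n <= \dim {:L})%N -> forall a b, a != b ->
  \rank (regular_code n a - regular_code n b) = n.
Proof.
move=> le_n_dim a b neq_ab; rewrite /regular_code.
rewrite -linearB -mulmxBr -regular_mxB mxrank_tr mxrankMfree ?rank_pid_mx //.
by rewrite row_free_regular_mx // subr_eq0.
Qed.

End RegularRepresentation.

Section Colorings.
Variables (F : fieldType) (N n d : nat).

Lemma exact_dist_coloring_card (I : finType) (c : I -> 'M[F]_(N, n))
    L (G : 'M[F]_(N, n) -> 'I_L) :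
  (forall x y, x != y -> \rank (c x - c y) = d) ->
  exact_dist_coloring d G -> (#|I| <= L)%N.
Proof.
move=> rank_c colG.
have inj_Gc : injective (G \o c).
  move=> x y /=; apply: contra_eq => neq_xy.
  by apply/eqP; apply: colG; apply: rank_c.
by rewrite -[L]card_ord; apply: leq_card inj_Gc.
Qed.

Lemma full_col_rank_col0 (A : 'M[F]_(N, n.+1)) :
  \rank A = n.+1 -> col 0 A != 0.
Proof.
move=> rankA; apply/eqP => col0A.
have freeAT : row_free A^T by rewrite /row_free mxrank_tr rankA.
have : row 0 A^T == 0 by rewrite -tr_col col0A trmx0.
rewrite rowE (mulmx_free_eq0 _ freeAT) => /eqP/matrixP/(_ 0 0).
by rewrite !mxE eqxx; apply/eqP; exact: oner_neq0.
Qed.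

End Colorings.

Lemma first_column_coloring (F : finFieldType) N n :
  exists G : 'M[F]_(N, n.+1) -> 'I_(#|F| ^ N), exact_dist_coloring n.+1 G.
Proof.
have card_cols : #|{: 'cV[F]_N}| = (#|F| ^ N)%N by rewrite card_mx muln1.
exists (fun M => cast_ord card_cols (enum_rank (col 0 M))).
move=> M1 M2 rank12 /cast_ord_inj/enum_rank_inj eq_cols.
by move: (full_col_rank_col0 rank12); rewrite linearB /= eq_cols subrr eqxx.
Qed.

Lemma is_chi_Fp_full_col_rank p N n : prime p -> (0 < n <= N)%N ->
  is_chi 'F_p N n n (p ^ N).
Proof.
move=> p_pr /andP[n_gt0 le_nN].
have [Fm pcharFm cardFm] := pPrimePowerField p_pr (leq_trans n_gt0 le_nN).
pose L := pPrimeCharType pcharFm.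
have dimL : \dim {:L} = N by rewrite pprimeChar_dimf cardFm pfactorK.
split.
  case: n n_gt0 {le_nN} => // n _.
  by have := @first_column_coloring 'F_p N n; rewrite card_Fp.
move=> K G colG; rewrite -cardFm.
rewrite -dimL in G colG le_nN.
exact: (@exact_dist_coloring_card _ _ _ _ L _ _ _ (rank_regular_code le_nN) colG).
Qed.

Theorem proposition4p2 (N n : nat) :
  ((1 <= N)%N /\ n = 1%N) \/ (N = 2%N /\ n = 2%N) \/ (N = 3%N /\ n = 2%N)
    \/ (N = 3%N /\ n = 3%N) ->
  is_chi 'F_2 N n n (2 ^ N).
Proof.
move=> cases; apply: is_chi_Fp_full_col_rank => //.
by case: cases => [[? ->]|[[-> ->]|[[-> ->]|[-> ->]]]].
Qed.
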